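(* Let $A\in\mathbb{C}^{m\times n}$ have rank $r$, $B\in\mathbb{C}^{m\times n}$ have rank $s$, and $E=B-A$. Then $$\|B^{\dagger}-A^{\dagger}\|_{F}^{2}\geq\max\big\{\beta'_{1}+\|B^{\dagger}EA^{\dagger}\|_{F}^{2},\ \beta'_{2}+\|A^{\dagger}EB^{\dagger}\|_{F}^{2}\big\},$$ where $$\beta'_{1}:=\frac{\|E\|_{F}^{2}-\|EB^{\dagger}B\|_{F}^{2}}{\|A\|_{2}^{4}}+\frac{\|E\|_{F}^{2}-\|AA^{\dagger}E\|_{F}^{2}}{\|B\|_{2}^{4}},\qquad \beta'_{2}:=\frac{\|E\|_{F}^{2}-\|BB^{\dagger}E\|_{F}^{2}}{\|A\|_{2}^{4}}+\frac{\|E\|_{F}^{2}-\|EA^{\dagger}A\|_{F}^{2}}{\|B\|_{2}^{4}}.$$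
   Context: $M^{\dagger}$ denotes the Moore–Penrose inverse of $M$, $\|\cdot\|_{2}$ the spectral norm and $\|\cdot\|_{F}$ the Frobenius norm. *)

From HB Require Import structures.
From mathcomp Require Import all_boot all_order all_algebra.
From mathcomp Require Import classical_sets reals.
From mathcomp.real_closed Require Export complex.

Set Implicit Arguments.
Unset Strict Implicit.
Unset Printing Implicit Defensive.

Import Order.TTheory GRing.Theory Num.Theory.
Local Open Scope ring_scope.
Local Open Scope classical_set_scope.

Section Defs.
Variable R : realType.
Local Notation C := (complex R).

Definition ctrmx m n (A : 'M[C]_(m, n)) : 'M[C]_(n, m) :=
  \matrix_(i, j) conjc (A j i).

(* A^+ is the Moore-Penrose inverse of A (Penrose equations; it is unique) *)
Definition is_pinv m n (A : 'M[C]_(m, n)) (X : 'M[C]_(n, m)) : Prop :=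
  [/\ A *m X *m A = A, X *m A *m X = X,
      ctrmx (A *m X) = A *m X & ctrmx (X *m A) = X *m A].

Definition frob2 m n (A : 'M[C]_(m, n)) : R :=
  \sum_i \sum_j ((@complex.Re R (A i j)) ^+ 2 + (@complex.Im R (A i j)) ^+ 2).

Definition frob m n (A : 'M[C]_(m, n)) : R := Num.sqrt (frob2 A).

Definition spec_norm m n (A : 'M[C]_(m, n)) : R :=
  reals.sup [set frob (A *m x) | x in [set x : 'cV[C]_n | frob x = 1]].

End Defs.

From mathcomp Require Import all_boot all_order all_algebra.
From mathcomp Require Import classical_sets reals.
From mathcomp Require Import ring lra.
Import Order.TTheory GRing.Theory Num.Theory.
Local Open Scope ring_scope.
Set Implicit Arguments.
Unset Strict Implicit.
Unset Printing Implicit Defensive.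

(* Write E = B - A and let P = 1 - A A^+ and Q = 1 - B^+ B, the orthogonal
   projectors onto the complements of the ranges of A and B^*.  Then
     B^+ - A^+ = - B^+ E A^+ + B^+ P - Q A^+,
   and the three terms are pairwise orthogonal for the Frobenius inner product,
   so their squared norms add up.  Since P A = 0 and B Q = 0, Pythagoras gives
   |E|^2 - |A A^+ E|^2 = |P B|^2 and |E|^2 - |E B^+ B|^2 = |A Q|^2; writing
   B^* = B^* B B^+ and A = A A^* (A^+)^* bounds these by |B|_2^4 |B^+ P|^2 and
   |A|_2^4 |Q A^+|^2.  This is the first bound of the maximum; the second one is
   the first with the roles of A and B exchanged. *)

(* [y = 0] is allowed because [x / 0 = 0]. *)
Lemma ler_wpdivrMl (F : realFieldType) (x y z : F) :
  0 <= y -> 0 <= z -> x <= y * z -> x / y <= z.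
Proof.
move=> y_ge0 z_ge0; have [->|y_neq0] := eqVneq y 0; first by rewrite invr0 mulr0.
by rewrite ler_pdivrMr ?lt_def ?y_neq0 // mulrC.
Qed.

Lemma sqr_le_discr (F : realFieldType) (a b c : F) : 0 <= c ->
  (forall t, 0 <= a - 2 * t * b + t ^+ 2 * c) -> b ^+ 2 <= a * c.
Proof.
move=> c_ge0 nonneg; have [c_gt0|] := ltrP 0 c.
  have := nonneg (b / c).
  have -> : a - 2 * (b / c) * b + (b / c) ^+ 2 * c = (a * c - b ^+ 2) / c.
    by field; rewrite gt_eqF.
  by rewrite pmulr_lge0 ?invr_gt0 // subr_ge0.
move=> c_le0; have c0 : c = 0 by apply/le_anti; rewrite c_le0 c_ge0.
rewrite c0 mulr0 in nonneg *; have [->|b_neq0] := eqVneq b 0; first by rewrite expr0n.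
have := nonneg ((a + 1) / (2 * b)).
have -> : a - 2 * ((a + 1) / (2 * b)) * b + ((a + 1) / (2 * b)) ^+ 2 * 0 = -1.
  by field; rewrite b_neq0.
by rewrite oppr_ge0 ler10.
Qed.

Section FrobeniusPinv.
Variable R : realType.
Local Notation C := (complex R).
Local Open Scope complex_scope.

Lemma ctrmxE m n (A : 'M[C]_(m, n)) : ctrmx A = map_mx conjc A^T.
Proof. by apply/matrixP=> i j; rewrite !mxE. Qed.

Lemma ctrmxK m n (A : 'M[C]_(m, n)) : ctrmx (ctrmx A) = A.
Proof. by apply/matrixP=> i j; rewrite !mxE conjcK. Qed.

Lemma ctrmx_mul m n p (A : 'M[C]_(m, n)) (B : 'M_(n, p)) :
  ctrmx (A *m B) = ctrmx B *m ctrmx A.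
Proof. by rewrite !ctrmxE trmx_mul map_mxM. Qed.

Lemma ctrmxD m n (A B : 'M[C]_(m, n)) : ctrmx (A + B) = ctrmx A + ctrmx B.
Proof. by rewrite !ctrmxE linearD /= map_mxD. Qed.

Lemma ctrmxN m n (A : 'M[C]_(m, n)) : ctrmx (- A) = - ctrmx A.
Proof. by rewrite !ctrmxE linearN /= map_mxN. Qed.

Lemma ctrmxB m n (A B : 'M[C]_(m, n)) : ctrmx (A - B) = ctrmx A - ctrmx B.
Proof. by rewrite ctrmxD ctrmxN. Qed.

Lemma ctrmx1 m : ctrmx (1%:M : 'M[C]_m) = 1%:M.
Proof. by apply/matrixP=> i j; rewrite !mxE conjc_nat eq_sym. Qed.

Lemma ctrmxZ m n c (A : 'M[C]_(m, n)) : ctrmx (c *: A) = conjc c *: ctrmx A.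
Proof. by apply/matrixP=> i j; rewrite !mxE rmorphM. Qed.

Definition normc2 (z : C) : R := complex.Re z ^+ 2 + complex.Im z ^+ 2.

Lemma normc2E z : (normc2 z)%:C = z * conjc z.
Proof.
case: z => a b; apply/eqP; rewrite /normc2 eq_complex /=.
by apply/andP; split; apply/eqP; ring.
Qed.

Lemma normc2_ge0 z : 0 <= normc2 z.
Proof. by rewrite addr_ge0 ?sqr_ge0. Qed.

Lemma normc2J z : normc2 (conjc z) = normc2 z.
Proof. by case: z => a b; rewrite /normc2 /= sqrrN. Qed.

Lemma normc2_real (r : R) : normc2 r%:C = r ^+ 2.
Proof. by rewrite /normc2 /= expr0n addr0. Qed.

Definition frobdot m n (X Y : 'M[C]_(m, n)) : C := \tr (X *m ctrmx Y).

Lemma frobdotDl m n (X Y Z : 'M[C]_(m, n)) :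
  frobdot (X + Y) Z = frobdot X Z + frobdot Y Z.
Proof. by rewrite /frobdot mulmxDl mxtraceD. Qed.

Lemma frobdotDr m n (X Y Z : 'M[C]_(m, n)) :
  frobdot X (Y + Z) = frobdot X Y + frobdot X Z.
Proof. by rewrite /frobdot ctrmxD mulmxDr mxtraceD. Qed.

Lemma frobdotZl m n c (X Y : 'M[C]_(m, n)) : frobdot (c *: X) Y = c * frobdot X Y.
Proof. by rewrite /frobdot -scalemxAl mxtraceZ. Qed.

Lemma frobdotZr m n c (X Y : 'M[C]_(m, n)) :
  frobdot X (c *: Y) = conjc c * frobdot X Y.
Proof. by rewrite /frobdot ctrmxZ -scalemxAr mxtraceZ. Qed.

Lemma frobdotC m n (X Y : 'M[C]_(m, n)) : frobdot Y X = conjc (frobdot X Y).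
Proof.
rewrite /frobdot /mxtrace rmorph_sum; apply: eq_bigr => i _.
rewrite !mxE rmorph_sum; apply: eq_bigr => k _.
by rewrite !mxE rmorphM mulrC; congr (_ * _); case: (Y i k) => a b; rewrite /= opprK.
Qed.

Lemma frobdot_mulmxl m n p (M : 'M[C]_(m, n)) (X : 'M_(n, p)) Y :
  frobdot (M *m X) Y = frobdot X (ctrmx M *m Y).
Proof. by rewrite /frobdot ctrmx_mul ctrmxK -mulmxA mxtrace_mulC mulmxA. Qed.

Lemma frobdot_eq0l m n (X Y : 'M[C]_(m, n)) : X *m ctrmx Y = 0 -> frobdot X Y = 0.
Proof. by rewrite /frobdot => ->; rewrite mxtrace0. Qed.

Lemma frobdot_eq0r m n (X Y : 'M[C]_(m, n)) : ctrmx Y *m X = 0 -> frobdot X Y = 0.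
Proof. by rewrite /frobdot mxtrace_mulC => ->; rewrite mxtrace0. Qed.

Lemma frob2E m n (X : 'M[C]_(m, n)) : (frob2 X)%:C = frobdot X X.
Proof.
rewrite /frob2 /frobdot /mxtrace rmorph_sum; apply: eq_bigr => i _.
rewrite rmorph_sum !mxE; apply: eq_bigr => j _.
by rewrite !mxE -normc2E.
Qed.

Lemma frob2_ge0 m n (X : 'M[C]_(m, n)) : 0 <= frob2 X.
Proof. by do 2![apply: sumr_ge0 => ? _]; apply: normc2_ge0. Qed.

Lemma frob_sqr m n (X : 'M[C]_(m, n)) : frob X ^+ 2 = frob2 X.
Proof. by rewrite sqr_sqrtr // frob2_ge0. Qed.

Lemma frob2_ctrmx m n (X : 'M[C]_(m, n)) : frob2 (ctrmx X) = frob2 X.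
Proof. by apply: complexI; rewrite !frob2E /frobdot ctrmxK mxtrace_mulC. Qed.

Lemma frob2Z m n c (X : 'M[C]_(m, n)) : frob2 (c *: X) = normc2 c * frob2 X.
Proof.
by apply: complexI; rewrite rmorphM /= !frob2E frobdotZl frobdotZr normc2E; ring.
Qed.

Lemma frob2N m n (X : 'M[C]_(m, n)) : frob2 (- X) = frob2 X.
Proof.
by apply: complexI; rewrite !frob2E -scaleN1r frobdotZl frobdotZr rmorphN1; ring.
Qed.

Lemma frob2D m n (X Y : 'M[C]_(m, n)) :
  frob2 (X + Y) = frob2 X + frob2 Y + 2 * complex.Re (frobdot X Y).
Proof.
apply: complexI; rewrite !rmorphD rmorphM /= !frob2E frobdotDl !frobdotDr.
by rewrite (frobdotC X Y) rmorph_nat -addcJ; ring.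
Qed.

Lemma frob2D_orth m n (X Y : 'M[C]_(m, n)) :
  frobdot X Y = 0 -> frob2 (X + Y) = frob2 X + frob2 Y.
Proof. by move=> XY0; rewrite frob2D XY0 mulr0 addr0. Qed.

Lemma sqr_Re_frobdot_le m n (X Y : 'M[C]_(m, n)) :
  complex.Re (frobdot X Y) ^+ 2 <= frob2 X * frob2 Y.
Proof.
apply: sqr_le_discr; first exact: frob2_ge0.
move=> t; have := frob2_ge0 (X + (- t)%:C *: Y).
rewrite frob2D frob2Z normc2_real sqrrN frobdotZr conjc_real.
by case: (frobdot X Y) => a b /=; rewrite mul0r subr0; lra.
Qed.

Lemma normc2_frobdot_le m n (X Y : 'M[C]_(m, n)) :
  normc2 (frobdot X Y) <= frob2 X * frob2 Y.
Proof.
set z := frobdot X Y; have := sqr_Re_frobdot_le (conjc z *: X) Y.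
rewrite frobdotZl frob2Z normc2J mulrC -normc2E /= expr2 -mulrA.
have [->|z_neq0] := eqVneq (normc2 z) 0; first by rewrite mulr_ge0 ?frob2_ge0.
by rewrite ler_pM2l // lt_def z_neq0 normc2_ge0.
Qed.

Lemma frob2_cols m n (X : 'M[C]_(m, n)) : frob2 X = \sum_j frob2 (col j X).
Proof.
rewrite /frob2 exchange_big /=; apply: eq_bigr => j _.
by apply: eq_bigr => i _; rewrite big_ord1 !mxE.
Qed.

Lemma frob2_rows m n (X : 'M[C]_(m, n)) : frob2 X = \sum_i frob2 (row i X).
Proof.
apply: eq_bigr => i _; rewrite /frob2 big_ord1.
by apply: eq_bigr => j _; rewrite !mxE.
Qed.

Lemma col_mulmx m n p (A : 'M[C]_(m, n)) (X : 'M_(n, p)) j :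
  col j (A *m X) = A *m col j X.
Proof. by apply/matrixP => i k; rewrite !mxE; apply: eq_bigr => l _; rewrite !mxE. Qed.

Lemma frob2_mulmx_le m n p (A : 'M[C]_(m, n)) (X : 'M_(n, p)) :
  frob2 (A *m X) <= frob2 A * frob2 X.
Proof.
rewrite [frob2 A]frob2_rows [frob2 X]frob2_cols {1}/frob2 mulr_suml.
apply: ler_sum => i _.
rewrite mulr_sumr; apply: ler_sum => j _.
have -> : (A *m X) i j = frobdot (row i A) (ctrmx (col j X)).
  rewrite /frobdot ctrmxK /mxtrace big_ord1 !mxE.
  by apply: eq_bigr => k _; rewrite !mxE.
by rewrite -(frob2_ctrmx (col j X)) normc2_frobdot_le.
Qed.

Lemma frob2_mulmx_cV_le_spec m n (A : 'M[C]_(m, n)) (x : 'cV[C]_n) :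
  frob2 (A *m x) <= spec_norm A ^+ 2 * frob2 x.
Proof.
have bounded : has_ubound [set frob (A *m y) | y in [set y : 'cV[C]_n | frob y = 1]].
  exists (frob A) => _ [y /= y1 <-]; apply: ler_wsqrtr.
  by rewrite -[frob2 A]mulr1 -(expr1n _ 2) -y1 frob_sqr frob2_mulmx_le.
have [x0|x_neq0] := eqVneq (frob2 x) 0.
  by have := frob2_mulmx_le A x; rewrite x0 !mulr0.
have x_gt0 : 0 < frob2 x by rewrite lt_def x_neq0 frob2_ge0.
set y := (frob x)^-1%:C *: x.
have y1 : frob y = 1.
  by rewrite /frob frob2Z normc2_real exprVn frob_sqr mulVf ?gt_eqF // sqrtr1.
have Ay_le : frob (A *m y) <= spec_norm A by apply: (ub_le_sup bounded); exists y.
have := lerXn2r 2 (sqrtr_ge0 _) (le_trans (sqrtr_ge0 _) Ay_le) Ay_le.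
rewrite frob_sqr /y -scalemxAr frob2Z normc2_real exprVn frob_sqr.
by rewrite ler_pdivrMl // mulrC.
Qed.

Lemma frob2_mulmx_le_spec m n p (A : 'M[C]_(m, n)) (X : 'M_(n, p)) :
  frob2 (A *m X) <= spec_norm A ^+ 2 * frob2 X.
Proof.
rewrite !frob2_cols mulr_sumr; apply: ler_sum => j _.
by rewrite col_mulmx frob2_mulmx_cV_le_spec.
Qed.

Lemma frob2_ctrmx_mulmx_le_spec m n p (A : 'M[C]_(m, n)) (Y : 'M_(m, p)) :
  frob2 (ctrmx A *m Y) <= spec_norm A ^+ 2 * frob2 Y.
Proof.
set W := ctrmx A *m Y.
have W2E : frob2 W = complex.Re (frobdot Y (A *m W)).
  by rewrite -[in RHS](ctrmxK A) -frobdot_mulmxl -frob2E.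
have : frob2 W ^+ 2 <= frob2 Y * (spec_norm A ^+ 2 * frob2 W).
  rewrite {1}W2E; apply: (le_trans (sqr_Re_frobdot_le _ _)).
  by rewrite ler_wpM2l ?frob2_ge0 ?frob2_mulmx_le_spec.
have [->|W_neq0] := eqVneq (frob2 W) 0; first by rewrite mulr_ge0 ?sqr_ge0 ?frob2_ge0.
rewrite expr2 mulrA [_ * spec_norm A ^+ 2]mulrC ler_pM2r //.
by rewrite lt_def W_neq0 frob2_ge0.
Qed.

Section OrthoProjection.
Variables (k : nat) (P : 'M[C]_k).
Hypotheses (P_herm : ctrmx P = P) (P_idem : P *m P = P).

Lemma frob2_projl n (X : 'M[C]_(k, n)) :
  frob2 X = frob2 (P *m X) + frob2 ((1%:M - P) *m X).
Proof.
have splitX : P *m X + (1%:M - P) *m X = X by rewrite -mulmxDl addrC subrK mul1mx.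
rewrite -{1}splitX frob2D_orth //; apply: frobdot_eq0r.
rewrite ctrmx_mul ctrmxB ctrmx1 P_herm -!mulmxA (mulmxA (1%:M - P)).
by rewrite mulmxBl mul1mx P_idem subrr mul0mx mulmx0.
Qed.

Lemma frob2_projr m (X : 'M[C]_(m, k)) :
  frob2 X = frob2 (X *m P) + frob2 (X *m (1%:M - P)).
Proof.
rewrite -frob2_ctrmx -[frob2 (X *m P)]frob2_ctrmx -[frob2 (X *m _)]frob2_ctrmx.
by rewrite !ctrmx_mul ctrmxB ctrmx1 P_herm -frob2_projl.
Qed.

End OrthoProjection.

Lemma frob2_mulmx_le_pinv m n p (A : 'M[C]_(m, n)) Ad (X : 'M_(n, p)) :
  is_pinv A Ad -> frob2 (A *m X) <= spec_norm A ^+ 4 * frob2 (ctrmx X *m Ad).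
Proof.
case=> AAdA _ _ AdAH.
have A_eq : A = A *m (ctrmx A *m ctrmx Ad) by rewrite -ctrmx_mul AdAH mulmxA AAdA.
rewrite {1}A_eq -!mulmxA; apply: le_trans (frob2_mulmx_le_spec _ _) _.
rewrite -[4%N]/(2 + 2)%N exprD -mulrA ler_wpM2l ?sqr_ge0 //.
have -> : ctrmx Ad *m X = ctrmx (ctrmx X *m Ad) by rewrite ctrmx_mul ctrmxK.
by rewrite -[frob2 (ctrmx X *m Ad)]frob2_ctrmx frob2_ctrmx_mulmx_le_spec.
Qed.

Lemma frob2_ctrmx_mulmx_le_pinv m n p (B : 'M[C]_(m, n)) Bd (X : 'M_(m, p)) :
  is_pinv B Bd -> frob2 (ctrmx B *m X) <= spec_norm B ^+ 4 * frob2 (Bd *m X).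
Proof.
case=> BBdB _ BBdH _.
have Bc_eq : ctrmx B = ctrmx B *m (B *m Bd) by rewrite -BBdH -ctrmx_mul BBdB.
rewrite Bc_eq -!mulmxA; apply: le_trans (frob2_ctrmx_mulmx_le_spec _ _) _.
by rewrite -[4%N]/(2 + 2)%N exprD -mulrA ler_wpM2l ?sqr_ge0 ?frob2_mulmx_le_spec.
Qed.

Lemma frob2_sub_pinv m n (A B : 'M[C]_(m, n)) Ad Bd :
  is_pinv A Ad -> is_pinv B Bd ->
  frob2 (Bd - Ad) = frob2 (Bd *m (B - A) *m Ad)
    + frob2 (Bd *m (1%:M - A *m Ad)) + frob2 ((1%:M - Bd *m B) *m Ad).
Proof.
case=> _ AdAAd AAdH _ [_ BdBBd _ BdBH].
set P := 1%:M - A *m Ad; set Q := 1%:M - Bd *m B.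
have P_herm : ctrmx P = P by rewrite ctrmxB ctrmx1 AAdH.
have Q_herm : ctrmx Q = Q by rewrite ctrmxB ctrmx1 BdBH.
have AdP : Ad *m P = 0 by rewrite mulmxBr mulmx1 mulmxA AdAAd subrr.
have QBd : Q *m Bd = 0 by rewrite mulmxBl mul1mx BdBBd subrr.
have splitD : Bd - Ad = - (Bd *m (B - A) *m Ad) + Bd *m P + - (Q *m Ad).
  rewrite /P /Q !(mulmxBr, mulmxBl, mulmx1, mul1mx) !mulmxA.
  move: (Bd *m B *m Ad) (Bd *m A *m Ad) => U V.
  by apply/matrixP => i j; rewrite !mxE; ring.
have o12 : frobdot (- (Bd *m (B - A) *m Ad)) (Bd *m P) = 0.
  apply: frobdot_eq0l; rewrite ctrmx_mul P_herm mulNmx -!mulmxA (mulmxA Ad) AdP.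
  by rewrite mul0mx !mulmx0 oppr0.
have o13 : frobdot (- (Bd *m (B - A) *m Ad)) (- (Q *m Ad)) = 0.
  apply: frobdot_eq0r; rewrite ctrmxN ctrmx_mul Q_herm mulNmx mulmxN opprK.
  by rewrite -!mulmxA (mulmxA Q) QBd mul0mx !mulmx0.
have o23 : frobdot (Bd *m P) (- (Q *m Ad)) = 0.
  apply: frobdot_eq0r; rewrite ctrmxN ctrmx_mul Q_herm mulNmx.
  by rewrite -!mulmxA (mulmxA Q) QBd mul0mx !mulmx0 oppr0.
rewrite splitD frob2D_orth ?frobdotDl ?o13 ?o23 ?addr0 //.
by rewrite frob2D_orth // !frob2N.
Qed.

Lemma frob2_sub_pinv_ge m n (A B : 'M[C]_(m, n)) Ad Bd :
  is_pinv A Ad -> is_pinv B Bd ->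
  (frob2 (B - A) - frob2 ((B - A) *m Bd *m B)) / spec_norm A ^+ 4
  + (frob2 (B - A) - frob2 (A *m Ad *m (B - A))) / spec_norm B ^+ 4
  + frob2 (Bd *m (B - A) *m Ad) <= frob2 (Bd - Ad).
Proof.
move=> pinvA pinvB; rewrite (frob2_sub_pinv pinvA pinvB).
have [AAdA _ AAdH _] := pinvA; have [BBdB _ _ BdBH] := pinvB.
have AAd_idem : A *m Ad *m (A *m Ad) = A *m Ad by rewrite mulmxA AAdA.
have BdB_idem : Bd *m B *m (Bd *m B) = Bd *m B by rewrite -mulmxA (mulmxA B) BBdB.
have PE_le : frob2 (B - A) - frob2 (A *m Ad *m (B - A))
    <= spec_norm B ^+ 4 * frob2 (Bd *m (1%:M - A *m Ad)).
  rewrite {1}(frob2_projl AAdH AAd_idem (B - A)) addrAC subrr add0r.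
  rewrite [X in frob2 X](_ : _ = (1%:M - A *m Ad) *m B); last first.
    by rewrite mulmxBr [X in _ - X]mulmxBl mul1mx AAdA subrr subr0.
  rewrite -frob2_ctrmx ctrmx_mul ctrmxB ctrmx1 AAdH.
  exact: frob2_ctrmx_mulmx_le_pinv.
have EQ_le : frob2 (B - A) - frob2 ((B - A) *m Bd *m B)
    <= spec_norm A ^+ 4 * frob2 ((1%:M - Bd *m B) *m Ad).
  rewrite {1}(frob2_projr BdBH BdB_idem (B - A)) -mulmxA addrAC subrr add0r.
  rewrite [X in frob2 X](_ : _ = - (A *m (1%:M - Bd *m B))); last first.
    by rewrite mulmxBl [X in X - _]mulmxBr mulmx1 mulmxA BBdB subrr sub0r.
  have Q_herm : ctrmx (1%:M - Bd *m B) = 1%:M - Bd *m B by rewrite ctrmxB ctrmx1 BdBH.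
  rewrite frob2N -[X in frob2 (X *m Ad)]Q_herm.
  exact: frob2_mulmx_le_pinv.
rewrite [leLHS]addrC -[leRHS]addrA lerD2l [leRHS]addrC.
by apply: lerD; apply: ler_wpdivrMl; rewrite ?exprn_even_ge0 ?frob2_ge0.
Qed.

End FrobeniusPinv.

Theorem corollary3p7 (R : realType) (m n r s : nat)
    (A B : 'M[complex R]_(m, n)) (Ad Bd : 'M[complex R]_(n, m)) :
  \rank A = r -> \rank B = s ->
  is_pinv A Ad -> is_pinv B Bd ->
  let E := B - A in
  let beta1 := (frob E ^+ 2 - frob (E *m Bd *m B) ^+ 2) / spec_norm A ^+ 4
             + (frob E ^+ 2 - frob (A *m Ad *m E) ^+ 2) / spec_norm B ^+ 4 in
  let beta2 := (frob E ^+ 2 - frob (B *m Bd *m E) ^+ 2) / spec_norm A ^+ 4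
             + (frob E ^+ 2 - frob (E *m Ad *m A) ^+ 2) / spec_norm B ^+ 4 in
  Num.max (beta1 + frob (Bd *m E *m Ad) ^+ 2) (beta2 + frob (Ad *m E *m Bd) ^+ 2)
    <= frob (Bd - Ad) ^+ 2.
Proof.
move=> _ _ pinvA pinvB /=.
rewrite !frob_sqr ge_max (frob2_sub_pinv_ge pinvA pinvB) andTb.
rewrite [X in X + _ <= _]addrC.
have := frob2_sub_pinv_ge pinvB pinvA.
by rewrite -(opprB B A) -(opprB Bd Ad) !(mulNmx, mulmxN, frob2N).
Qed.
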